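(* Let $\mathsf{S}$ be a random sprinkle in $d$-dimensional Minkowski spacetime, i.e. the set of points of a Poisson point process with intensity $\rho\cdot\nu$ ($\rho>0$ constant, $\nu$ Lebesgue volume measure), with the causal order restricted from Minkowski spacetime. Then, with probability $1$, $\mathsf{S}$ contains no pair of distinct singleton-symmetric elements.
   Context: Minkowski spacetime $\mathbb{M}^d$ is $\mathbb{R}^{1,d-1}$ with metric $\mathrm{diag}(1,-1,\dots,-1)$, partially ordered by $x\le y$ iff $y-x$ is zero or a future-directed causal vector. In a poset $P$, $b$ covers $a$ if $a<b$ and no $c$ satisfies $a<c<b$; $L^-(a)$ is the set of elements covered by $a$ and $L^+(a)$ the set of elements covering $a$. Two elements $a,b\in P$ are singleton-symmetric if $L^-(a)=L^-(b)$ and $L^+(a)=L^+(b)$. *)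

From HB Require Import structures.
From mathcomp Require Import all_boot all_order all_algebra.
From mathcomp Require Import all_classical all_reals all_analysis.
From mathcomp Require Import finmap.
Set Implicit Arguments. Unset Strict Implicit. Unset Printing Implicit Defensive.
Import Order.TTheory GRing.Theory Num.Theory.
Local Open Scope classical_set_scope.
Local Open Scope ring_scope.

Section Minkowski.
Variables (R : realType) (d : nat).

(* Points of d-dimensional Minkowski spacetime R^{1,d-1}: d-tuples of reals,
   coordinate 0 is time, coordinates 1..d-1 are space.  The measurable
   structure on d.-tuple R is the library's product (Borel) sigma-algebra. *)
Definition time (x : d.-tuple R) : R := nth 0 x 0.
Definition space_sq (x : d.-tuple R) : R := \sum_(1 <= i < d) (nth 0 x i) ^+ 2.
Definition diffv (y x : d.-tuple R) : d.-tuple R :=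
  [tuple tnth y i - tnth x i | i < d].

Definition future_causal (v : d.-tuple R) : Prop :=
  0 < time v /\ space_sq v <= time v ^+ 2.

Definition causal_le (x y : d.-tuple R) : Prop :=
  x = y \/ future_causal (diffv y x).
Definition causal_lt (x y : d.-tuple R) : Prop := causal_le x y /\ x <> y.

Definition covers (S : set (d.-tuple R)) (a b : d.-tuple R) : Prop :=
  S a /\ S b /\ causal_lt a b /\ ~ (exists c, S c /\ causal_lt a c /\ causal_lt c b).

Definition Lminus (S : set (d.-tuple R)) (a : d.-tuple R) : set (d.-tuple R) :=
  [set c | covers S c a].
Definition Lplus (S : set (d.-tuple R)) (a : d.-tuple R) : set (d.-tuple R) :=
  [set c | covers S a c].

Definition singleton_symmetric (S : set (d.-tuple R)) (a b : d.-tuple R) : Prop :=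
  Lminus S a = Lminus S b /\ Lplus S a = Lplus S b.

Definition box (a b : d.-tuple R) : set (d.-tuple R) :=
  [set x | forall i : 'I_d, tnth a i <= tnth x i < tnth b i].

(* nu is Lebesgue volume measure on R^d: it gives every box its volume
   (this characterizes Lebesgue measure on the Borel sets uniquely). *)
Definition is_lebesgue_volume (nu : {measure set (d.-tuple R) -> \bar R}) : Prop :=
  forall a b : d.-tuple R, (forall i : 'I_d, tnth a i <= tnth b i) ->
    nu (box a b) = (\prod_(i < d) (tnth b i - tnth a i))%:E.

Definition bounded_measurable (B : set (d.-tuple R)) : Prop :=
  measurable B /\ exists a b, B `<=` box a b.

(* Poisson probability mass function with mean r >= 0 (mean 0 gives Dirac at 0) *)
Definition poisson_mass (r : R) (k : nat) : R := r ^+ k / (factorial k)%:R * expR (- r).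

Definition count_in (X : set (d.-tuple R)) (B : set (d.-tuple R)) : nat :=
  #|` fset_set (X `&` B)|%fset.

Definition poisson_point_process (dT : measure_display) (T : measurableType dT)
    (P : probability T R) (nu : {measure set (d.-tuple R) -> \bar R}) (rho : R)
    (S : T -> set (d.-tuple R)) : Prop :=
  [/\ (forall B w, bounded_measurable B -> finite_set (S w `&` B)),
      (forall B k, bounded_measurable B ->
         measurable [set w | count_in (S w) B = k]),
      (forall B k, bounded_measurable B ->
         P [set w | count_in (S w) B = k] = (poisson_mass (rho * fine (nu B)) k)%:E) &
      (forall (m : nat) (B : 'I_m -> set (d.-tuple R)) (k : 'I_m -> nat),
         (forall i, bounded_measurable (B i)) ->
         (forall i j, i != j -> B i `&` B j = set0) ->
         P (\bigcap_(i in [set: 'I_m]) [set w | count_in (S w) (B i) = k i]) =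
         (\prod_(i < m) P [set w | count_in (S w) (B i) = k i])%E)].

End Minkowski.

(* A sprinkling is locally finite.  Hence, if [c] lies in the configuration
   with [c < a] but not [c < b], then among the points [e] with [c <= e < a]
   and [e] not below [b] one with the latest time is covered by [a] but not by
   [b], so L^-(a) <> L^-(b).  If [a] and [b] are comparable, the smaller one
   serves as [c].  If they are spacelike separated, there is an integer
   spatial direction [q] such that the null ray along [(|q|, q)] issuing
   (backwards) from a small grid cell just below [a] lies in the past of [a]
   and avoids the past of [b].  That ray is a union of infinitely many
   disjoint boxes of equal volume, so the Poisson process almost surely
   hits it.  There are only countably many such rays, so almost surely all of
   them are hit, which rules out every singleton-symmetric pair. *)

From Pilot Require Import Defs.
From HB Require Import structures.
From mathcomp Require Import all_boot all_order all_algebra.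
From mathcomp Require Import all_classical all_reals all_analysis finmap.
From mathcomp Require Import ring lra.
Import Order.TTheory GRing.Theory Num.Theory.
Local Open Scope classical_set_scope.
Local Open Scope ring_scope.
Set Implicit Arguments. Unset Strict Implicit. Unset Printing Implicit Defensive.

Section NatSums.
Variable R : realFieldType.

Lemma term_le_sum_nat (m n i : nat) (F : nat -> R) :
  (m <= i < n)%N -> (forall j, (m <= j < n)%N -> 0 <= F j) ->
  F i <= \sum_(m <= j < n) F j.
Proof.
move=> hi F0; rewrite (bigD1_seq i) ?mem_index_iota ?iota_uniq //= lerDl.
by rewrite big_seq_cond sumr_ge0 // => j /andP[/[!mem_index_iota] /F0].
Qed.

Lemma cauchy_schwarz_sum_nat (m n : nat) (x y : nat -> R) (A B : R) : 0 < A -> 0 < B ->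
  \sum_(m <= i < n) x i ^+ 2 <= A ^+ 2 -> \sum_(m <= i < n) y i ^+ 2 <= B ^+ 2 ->
  \sum_(m <= i < n) x i * y i <= A * B.
Proof.
move=> A0 B0 hx hy.
have amgm : 2 * A * B * \sum_(m <= i < n) x i * y i <=
    B ^+ 2 * \sum_(m <= i < n) x i ^+ 2 + A ^+ 2 * \sum_(m <= i < n) y i ^+ 2.
  rewrite !mulr_sumr -big_split /=; apply: ler_sum => i _.
  have := sqr_ge0 (B * x i - A * y i); nra.
have : B ^+ 2 * \sum_(m <= i < n) x i ^+ 2 <= B ^+ 2 * A ^+ 2 by rewrite ler_wpM2l ?sqr_ge0.
have : A ^+ 2 * \sum_(m <= i < n) y i ^+ 2 <= A ^+ 2 * B ^+ 2 by rewrite ler_wpM2l ?sqr_ge0.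
have AB : 0 < 2 * A * B by rewrite !mulr_gt0.
nra.
Qed.

End NatSums.

Section Floor.
Variable R : archiRealFieldType.

Lemma mul_floor_ge (K x : R) : K * x ^+ 2 - `|x| <= x * (Num.floor (K * x))%:~R.
Proof.
have /andP[fl flS] := floor_itv (K * x); rewrite intrD in flS.
by case: (lerP 0 x) => x0; [rewrite ger0_norm | rewrite ltr0_norm]; nra.
Qed.

Lemma sqr_floor_le (K x : R) : 0 <= K ->
  (Num.floor (K * x))%:~R ^+ 2 <= K ^+ 2 * x ^+ 2 + 2 * K * `|x| + 1.
Proof.
move=> K0; have /andP[fl flS] := floor_itv (K * x); rewrite intrD in flS.
case: (lerP 0 x) => x0; [rewrite ger0_norm | rewrite ltr0_norm] => //.
  have : 0 <= K * x by rewrite mulr_ge0.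
  nra.
have : K * x <= 0 by rewrite mulr_ge0_le0 // ltW.
nra.
Qed.

End Floor.

Lemma le0_of_le_expr (R : realType) (c z : R) :
  `|c| < 1 -> (forall n, z <= c ^+ n) -> z <= 0.
Proof.
move=> c1 zc; have cv : c ^+ n @[n --> \oo] --> 0 := cvg_expr c1.
by apply: (closed_cvg _ (@closed_ge _ z) _ _ cv); apply: nearW.
Qed.

Lemma finite_set_argmax (T : choiceType) (disp : Order.disp_t) (X : orderType disp)
    (F : set T) (f : T -> X) (x0 : T) :
  finite_set F -> F x0 -> exists2 m, F m & forall e, F e -> (f e <= f m)%O.
Proof.
move=> finF Fx0; have x0F : x0 \in fset_set F by rewrite in_fset_set //; exact/mem_set.
case: (@arg_maxP _ _ _ [` x0F]%fset xpredT (fun e => f (val e))) => // m _ mmax.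
exists (val m); first by have := valP m; rewrite in_fset_set // => /set_mem.
move=> e Fe; have eF : e \in fset_set F by rewrite in_fset_set //; exact/mem_set.
exact: (mmax [` eF]%fset).
Qed.

Lemma negligible_bigcup_countable (dT : measure_display) (T : sigmaRingType dT)
    (R : realFieldType) (mu : {measure set T -> \bar R}) (I : countType) (F : I -> set T) :
  (forall i, mu.-negligible (F i)) -> mu.-negligible (\bigcup_i F i).
Proof.
move=> negF; pose G (n : nat) := oapp F set0 (choice.unpickle n).
apply: (@negligibleS _ _ _ _ (\bigcup_n G n)).
  by move=> x [i _ Fix]; exists (choice.pickle i) => //; rewrite /G choice.pickleK.
apply: negligible_bigcup => n.
by rewrite /G; case: (choice.unpickle n) => [i|] /=; [apply: negF | apply: negligible_set0].
Qed.

Section FutureCone.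
Variables (R : realType) (d : nat).
Local Notation tup := (d.-tuple R).

Definition future_cone (v : nat -> R) : Prop :=
  0 < v 0%N /\ \sum_(1 <= i < d) v i ^+ 2 <= v 0%N ^+ 2.

Lemma future_cone_coord (v : nat -> R) i :
  future_cone v -> (1 <= i < d)%N -> `|v i| <= v 0%N.
Proof.
move=> [v0 vs] hi; have : v i ^+ 2 <= v 0%N ^+ 2.
  apply: le_trans vs; apply: (term_le_sum_nat (F := fun j => v j ^+ 2)) => // j _.
  exact: sqr_ge0.
by rewrite ler_norml => ?; apply/andP; split; nra.
Qed.

Lemma future_cone_dot (v w : nat -> R) (W : R) : future_cone v -> 0 < W ->
  \sum_(1 <= i < d) w i ^+ 2 <= W ^+ 2 -> \sum_(1 <= i < d) v i * w i <= v 0%N * W.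
Proof. by move=> [v0 vs] W0; exact: cauchy_schwarz_sum_nat v0 W0 vs. Qed.

Lemma future_coneD (u v : nat -> R) :
  future_cone u -> future_cone v -> future_cone (fun i => u i + v i).
Proof.
move=> [u0 us] [v0 vs]; split => /=; first exact: addr_gt0.
have uv := cauchy_schwarz_sum_nat u0 v0 us vs.
have -> : \sum_(1 <= i < d) (u i + v i) ^+ 2 = \sum_(1 <= i < d) u i ^+ 2 +
    \sum_(1 <= i < d) v i ^+ 2 + 2 * \sum_(1 <= i < d) u i * v i.
  by rewrite mulr_sumr -!big_split /=; apply: eq_bigr => i _; ring.
nra.
Qed.

Lemma future_cone_near_axis (v : nat -> R) (delta eps : R) :
  0 < eps -> d.+1%:R * eps < delta -> `|v 0%N - delta| <= eps ->
  (forall j, (1 <= j < d)%N -> `|v j| <= eps) -> future_cone v.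
Proof.
move=> eps0 small; rewrite ler_norml => /andP[v0l v0r] vj.
have deps : 0 <= d%:R * eps by rewrite mulr_ge0 // ltW.
have dv : d%:R * eps < v 0%N by rewrite mulrSr in small; lra.
split; first exact: le_lt_trans deps dv.
apply: (@le_trans _ _ (\sum_(1 <= j < d) eps ^+ 2)).
  by apply: ler_sum_nat => j /vj; rewrite ler_norml => /andP[? ?]; nra.
rewrite sumr_const_nat subn1 -mulr_natl.
have dd : (d.-1%:R : R) <= d%:R ^+ 2.
  rewrite -natrX ler_nat; case: (d) => // n.
  by rewrite expnS expn1 /= (leq_trans (leqnSn n)) // leq_pmulr.
have := ler_wpM2r (sqr_ge0 eps) dd; rewrite -exprMn.
have : (d%:R * eps) ^+ 2 <= v 0%N ^+ 2.
  by rewrite ler_sqr ?nnegrE ?deps ?(ltW dv) ?(le_trans deps (ltW dv)).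
lra.
Qed.

Lemma nth_diffv (y x : tup) : nth 0 (Defs.diffv y x) =1 (fun i => nth 0 y i - nth 0 x i).
Proof.
move=> i /=; case: (ltnP i d) => hi.
  by rewrite (nth_mktuple _ _ (Ordinal hi)) !(tnth_nth 0).
by rewrite !nth_default ?size_tuple ?card_ord ?subr0.
Qed.

Lemma future_causal_diffv (y x : tup) :
  future_causal (Defs.diffv y x) = future_cone (fun i => nth 0 y i - nth 0 x i).
Proof. by rewrite -(funext (nth_diffv y x)). Qed.

Lemma causal_ltP (x y : tup) : causal_lt x y <-> future_cone (fun i => nth 0 y i - nth 0 x i).
Proof.
rewrite -future_causal_diffv; split=> [[[->|//] []]|yx] //.
split=> [|exy]; first by right.
by move: yx; rewrite exy future_causal_diffv => -[]; rewrite subrr ltxx.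
Qed.

Lemma causal_le_lt_trans (x y z : tup) : causal_le x y -> causal_lt y z -> causal_lt x z.
Proof.
case=> [-> //|]; rewrite future_causal_diffv => xy /causal_ltP yz; apply/causal_ltP.
by have := future_coneD yz xy; congr future_cone; apply/funext => i; ring.
Qed.

Lemma causal_lt_trans (x y z : tup) : causal_lt x y -> causal_lt y z -> causal_lt x z.
Proof. by move=> [xy _]; exact: causal_le_lt_trans. Qed.

Lemma causal_le_coord (c e : tup) j : causal_le c e -> (j < d)%N ->
  `|nth 0 e j - nth 0 c j| <= nth 0 e 0 - nth 0 c 0.
Proof.
case=> [->|]; first by rewrite !subrr normr0.
rewrite future_causal_diffv => ce jd; have [ce0 _] := ce.
have [->|j0] := eqVneq j 0%N; first by rewrite gtr0_norm.
by apply: future_cone_coord ce _; rewrite lt0n j0.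
Qed.

Lemma incomparable_spacelike (a b : tup) : a <> b -> ~ causal_lt a b -> ~ causal_lt b a ->
  (nth 0 b 0 - nth 0 a 0) ^+ 2 < \sum_(1 <= j < d) (nth 0 b j - nth 0 a j) ^+ 2.
Proof.
move=> ab nab nba; rewrite ltNge; apply/negP => timelike.
have [t0|t0|t0] := ltgtP (nth 0 b 0 - nth 0 a 0) 0.
- apply: nba; apply/causal_ltP; split; first by rewrite subr_gt0 -subr_lt0.
  by rewrite -sqrrN opprB; under eq_bigr => j _ do rewrite -sqrrN opprB.
- by apply: nab; apply/causal_ltP.
apply: ab; apply: val_inj; apply: (@eq_from_nth _ 0); first by rewrite !size_tuple.
rewrite size_tuple => j jd; apply/eqP; rewrite eq_sym -subr_eq0 -sqrf_eq0 eq_le sqr_ge0 andbT.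
have [->|j0] := eqVneq j 0%N; first by rewrite t0 expr0n.
apply: le_trans (le_trans _ timelike) _; last by rewrite t0 expr0n.
apply: (term_le_sum_nat (F := fun j => (nth 0 b j - nth 0 a j) ^+ 2)) => [|i _].
  by rewrite lt0n j0.
exact: sqr_ge0.
Qed.

End FutureCone.

Section Covering.
Variables (R : realType) (d : nat).
Local Notation tup := (d.-tuple R).

Definition locally_finite (X : set tup) : Prop :=
  forall lo hi, finite_set (X `&` box lo hi).

Lemma causal_interval_sub_box (c a : tup) :
  exists lo hi, [set e | causal_le c e /\ causal_lt e a] `<=` box lo hi.
Proof.
pose D := nth 0 a 0 - nth 0 c 0.
exists [tuple nth 0 c i - D | i < d], [tuple nth 0 c i + D | i < d].
move=> e [ce /causal_ltP[ea0 _]] i; rewrite !tnth_mktuple (tnth_nth 0).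
have := causal_le_coord (j := 0) ce (leq_ltn_trans (leq0n _) (ltn_ord i)).
move=> /(le_trans (normr_ge0 _)) ce0.
have := causal_le_coord ce (ltn_ord i); rewrite ler_norml => /andP[? ?].
by rewrite /D; apply/andP; split; lra.
Qed.

Lemma exists_covered_not_below (X : set tup) (a b c : tup) : locally_finite X ->
  X a -> X c -> causal_lt c a -> ~ causal_lt c b ->
  exists m, covers X m a /\ ~ causal_lt m b.
Proof.
move=> finX Xa Xc ca ncb.
pose F := [set e | X e /\ causal_le c e /\ causal_lt e a /\ ~ causal_lt e b].
have [lo [hi cab]] := causal_interval_sub_box c a.
have finF : finite_set F.
  by apply: sub_finite_set (finX lo hi) => e [Xe [ce [ea _]]]; split => //; apply: cab.
have Fc : F c by do !split => //; left.
have [m [Xm [cm [ma nmb]]] mmax] := finite_set_argmax (fun e : tup => nth 0 e 0) finF Fc.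
exists m; split=> //; do 3!split=> //; case=> e [Xe [me ea]].
have Fe : F e.
  by do !split => //; [case: (causal_le_lt_trans cm me) | move/(causal_lt_trans me)].
by have := mmax e Fe; have /causal_ltP[] := me; rewrite subr_gt0 => /lt_geF ->.
Qed.

Lemma Lminus_neq (X : set tup) (a b c : tup) : locally_finite X ->
  X a -> X c -> causal_lt c a -> ~ causal_lt c b -> Lminus X a <> Lminus X b.
Proof.
move=> finX Xa Xc ca ncb eqL.
have [m [mca nmb]] := exists_covered_not_below finX Xa Xc ca ncb.
have : Lminus X b m by rewrite -eqL.
by case=> _ [_ []].
Qed.

End Covering.

Section NullRays.
Variables (R : realType) (d : nat).
Local Notation tup := (d.-tuple R).
Implicit Types (p q : d.-tuple int) (a b x y : nat -> R).

(* Only the spatial coordinates 1 .. d-1 of [q] are used. *)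
Definition qnorm q : R := Num.sqrt (\sum_(1 <= j < d) (nth 0 q j)%:~R ^+ 2).

Lemma qnorm_ge0 q : 0 <= qnorm q.
Proof. exact: sqrtr_ge0. Qed.

Lemma sqr_qnorm q : qnorm q ^+ 2 = \sum_(1 <= j < d) (nth 0 q j)%:~R ^+ 2.
Proof. by rewrite sqr_sqrtr // sumr_ge0 // => j _; apply: sqr_ge0. Qed.

Lemma qnorm_ge1 q : 0 < qnorm q -> 1 <= qnorm q.
Proof.
rewrite /qnorm; have -> : \sum_(1 <= j < d) (nth 0 q j)%:~R ^+ 2 =
    (\sum_(1 <= j < d) nth 0 q j ^+ 2)%:~R :> R.
  by rewrite rmorph_sum; apply: eq_bigr => j _; rewrite rmorphXn.
rewrite sqrtr_gt0 ltr0z gtz0_ge1 -(ler1z R) => ge1.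
by have := ler_wsqrtr ge1; rewrite sqrtr1.
Qed.

Lemma abs_coord_le_qnorm q j : (1 <= j < d)%N -> `|(nth 0 q j)%:~R| <= qnorm q.
Proof.
move=> hj; rewrite -ler_sqr ?nnegrE ?qnorm_ge0 // real_normK ?num_real // sqr_qnorm.
apply: (term_le_sum_nat (F := fun j => (nth 0 q j)%:~R ^+ 2)) => // i _.
exact: sqr_ge0.
Qed.

Lemma qnorm_gt0 q (s : nat -> R) :
  0 < \sum_(1 <= j < d) s j * (nth 0 q j)%:~R -> 0 < qnorm q.
Proof.
apply: contraTT; rewrite -leNgt => Q0.
have : \sum_(1 <= j < d) (nth 0 q j)%:~R ^+ 2 == 0 :> R.
  by rewrite -sqr_qnorm sqrf_eq0 eq_le Q0 qnorm_ge0.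
rewrite psumr_eq0 => [/allP q0|j _]; last exact: sqr_ge0.
rewrite -leNgt big_seq big1 // => j /q0 /=; rewrite sqrf_eq0 => /eqP ->.
by rewrite mulr0.
Qed.

Definition floor_dir (K : R) (s : nat -> R) : d.-tuple int :=
  [tuple Num.floor (K * s i) | i < d].

Lemma nth_floor_dir K s j : (j < d)%N -> nth 0 (floor_dir K s) j = Num.floor (K * s j).
Proof. by move=> jd; rewrite (nth_mktuple _ _ (Ordinal jd)). Qed.

Lemma floor_dir_dot_ge K s :
  K * \sum_(1 <= j < d) s j ^+ 2 - \sum_(1 <= j < d) `|s j| <=
  \sum_(1 <= j < d) s j * (nth 0 (floor_dir K s) j)%:~R.
Proof.
rewrite mulr_sumr -sumrB; apply: ler_sum_nat => j /andP[_ jd].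
by rewrite nth_floor_dir //; apply: mul_floor_ge.
Qed.

Lemma sqr_qnorm_floor_dir K s : 0 <= K ->
  qnorm (floor_dir K s) ^+ 2 <=
  K ^+ 2 * \sum_(1 <= j < d) s j ^+ 2 + 2 * K * \sum_(1 <= j < d) `|s j| + d%:R.
Proof.
move=> K0; rewrite sqr_qnorm.
apply: (@le_trans _ _ (\sum_(1 <= j < d) (K ^+ 2 * s j ^+ 2 + 2 * K * `|s j| + 1))).
  apply: ler_sum_nat => j /andP[_ jd].
  by rewrite nth_floor_dir //; apply: sqr_floor_le.
by rewrite !big_split /= -!mulr_sumr sumr_const_nat lerD2l ler_nat leq_subr.
Qed.

(* This [K] makes [t (K^2 N2 + 2 K L + d) < (K N2 - L)^2], which bounds
   [(s_0 |q|)^2 < <s, q>^2] by the two estimates above. *)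
Lemma exists_int_direction (s : nat -> R) :
  s 0%N ^+ 2 < \sum_(1 <= j < d) s j ^+ 2 -> exists q,
    0 < qnorm q /\ s 0%N * qnorm q < \sum_(1 <= j < d) s j * (nth 0 q j)%:~R.
Proof.
set N2 := \sum_(1 <= j < d) s j ^+ 2; set t := s 0%N ^+ 2 => tN2.
have t0 : 0 <= t by apply: sqr_ge0.
set L := \sum_(1 <= j < d) `|s j|.
have L0 : 0 <= L by apply: sumr_ge0.
have N2t : 0 < N2 - t by rewrite subr_gt0.
pose K := (4 * L + d%:R) / (N2 - t) + 1.
have K1 : 1 <= K.
  by rewrite lerDr; apply: divr_ge0; [rewrite addr_ge0 ?mulr_ge0 | apply: ltW].
have KN2t : 4 * L + d%:R < K * (N2 - t).
  by rewrite /K (mulrDl _ 1) mul1r divfK ?ltrDl // gt_eqF.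
pose q := floor_dir K s.
have D_ge := floor_dir_dot_ge K s; rewrite -/N2 -/L -/q in D_ge.
set D := \sum_(1 <= j < d) _ in D_ge.
have Q2_le := sqr_qnorm_floor_dir s (le_trans ler01 K1); rewrite -/N2 -/L -/q in Q2_le.
have Kt0 : 0 <= K * t by rewrite mulr_ge0 // (le_trans ler01).
have d0 : (0 : R) <= d%:R by [].
have D0 : 0 < D by nra.
have key : t * qnorm q ^+ 2 < D ^+ 2.
  have : t * qnorm q ^+ 2 <= t * (K ^+ 2 * N2 + 2 * K * L + d%:R) by rewrite ler_wpM2l.
  have : (K * N2 - L) ^+ 2 <= D ^+ 2 by rewrite ler_sqr ?nnegrE; nra.
  have : K * (4 * L + d%:R) < K * (K * (N2 - t)).
    by rewrite ltr_pM2l //; apply: lt_le_trans K1.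
  have : 0 <= K * L by rewrite mulr_ge0 // (le_trans ler01).
  have : (d%:R : R) <= K * d%:R by rewrite ler_peMl.
  nra.
exists q; split; first exact: qnorm_gt0 D0.
have [sQ|sQ] := lerP (s 0%N * qnorm q) 0; first exact: le_lt_trans sQ D0.
by rewrite -ltr_sqr ?nnegrE ?(ltW D0) ?(ltW sQ) // exprMn.
Qed.

Definition null_dir q (j : nat) : R := if j == 0%N then qnorm q else (nth 0 q j)%:~R.

Lemma null_shift_causal a b x y q (t : R) : 0 < qnorm q -> 0 < t ->
  (forall j, y j = x j + t * null_dir q j) ->
  future_cone d (fun j => a j - y j) ->
  (b 0%N - y 0%N) * qnorm q < \sum_(1 <= j < d) (b j - y j) * (nth 0 q j)%:~R ->
  future_cone d (fun j => a j - x j) /\ ~ future_cone d (fun j => b j - x j).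
Proof.
move=> Q0 t0 yE ay by_lt.
have tu : future_cone d (fun j => t * null_dir q j).
  split; first by rewrite /null_dir mulr_gt0.
  rewrite exprMn sqr_qnorm mulr_sumr.
  rewrite (eq_big_nat _ _ (F2 := fun j => t ^+ 2 * (nth 0 q j)%:~R ^+ 2)) //.
  by move=> j /andP[j1 _]; rewrite exprMn /null_dir -[j]prednK.
split.
  have := future_coneD ay tu; congr future_cone; apply/funext => j.
  by rewrite yE; ring.
move=> bx.
have qQ : \sum_(1 <= j < d) (nth 0 q j)%:~R ^+ 2 <= qnorm q ^+ 2 by rewrite sqr_qnorm.
have := future_cone_dot bx Q0 qQ.
have -> : \sum_(1 <= j < d) (b j - x j) * (nth 0 q j)%:~R =
    \sum_(1 <= j < d) (b j - y j) * (nth 0 q j)%:~R + t * qnorm q ^+ 2.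
  rewrite sqr_qnorm mulr_sumr -big_split; apply: eq_big_nat => j /andP[j1 _].
  by rewrite yE /null_dir -[j]prednK //=; ring.
by move: by_lt; rewrite yE /null_dir /=; nra.
Qed.

Lemma dot_lt_of_near a b y q (m eps : R) : 0 < qnorm q ->
  (b 0%N - a 0%N + m) * qnorm q <= \sum_(1 <= j < d) (b j - a j) * (nth 0 q j)%:~R ->
  (forall j, (1 <= j < d)%N -> `|a j - y j| <= eps) -> a 0%N - y 0%N + d.-1%:R * eps < m ->
  (b 0%N - y 0%N) * qnorm q < \sum_(1 <= j < d) (b j - y j) * (nth 0 q j)%:~R.
Proof.
move=> Q0 ab ay small.
have : - (eps * qnorm q) *+ d.-1 <= \sum_(1 <= j < d) (a j - y j) * (nth 0 q j)%:~R.
  rewrite -subn1 -sumr_const_nat; apply: ler_sum_nat => j j1d.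
  apply: lerNnormlW; rewrite normrM.
  exact: ler_pM (normr_ge0 _) (normr_ge0 _) (ay j j1d) (abs_coord_le_qnorm q j1d).
have -> : \sum_(1 <= j < d) (b j - y j) * (nth 0 q j)%:~R =
    \sum_(1 <= j < d) (b j - a j) * (nth 0 q j)%:~R +
    \sum_(1 <= j < d) (a j - y j) * (nth 0 q j)%:~R.
  by rewrite -big_split; apply: eq_bigr => j _ /=; ring.
rewrite mulNrn -mulr_natr.
have : 0 < qnorm q * (m - (a 0%N - y 0%N + d.-1%:R * eps)) by rewrite mulr_gt0 // subr_gt0.
nra.
Qed.

(* [ray_cell p q k n] is the grid cell [p / (k+1) + [0, 1/(k+1))^d] translated
   by [-(n+1) u], where [u = null_dir q] is a future null vector; [ray_corner]
   with [e = 0] and [e = 1] gives its two corners. *)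
Definition ray_corner p q (k n : nat) (e : R) : tup :=
  [tuple ((nth 0 p i)%:~R + e) / k.+1%:R - n.+1%:R * null_dir q i | i < d].

Definition ray_cell p q (k n : nat) : set tup :=
  box (ray_corner p q k n 0) (ray_corner p q k n 1).

Definition null_ray p q (k : nat) : set tup := \bigcup_n ray_cell p q k n.

Lemma ray_cellP p q k n (x : tup) j : ray_cell p q k n x -> (j < d)%N ->
  (nth 0 p j)%:~R / k.+1%:R <= nth 0 x j + n.+1%:R * null_dir q j <
  ((nth 0 p j)%:~R + 1) / k.+1%:R.
Proof.
move=> + jd => /(_ (Ordinal jd)); rewrite !tnth_mktuple (tnth_nth 0) /= addr0.
by rewrite lerBlDr ltrBrDr.
Qed.

Lemma exists_grid_cell_near (c : nat -> R) (eps : R) : 0 < eps ->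
  exists p (k : nat), forall y : nat -> R,
    (forall j, (j < d)%N ->
       (nth 0 p j)%:~R / k.+1%:R <= y j < ((nth 0 p j)%:~R + 1) / k.+1%:R) ->
    forall j, (j < d)%N -> `|y j - c j| <= eps.
Proof.
move=> eps0; pose k := Num.truncn eps^-1.
have k1 : eps^-1 < k.+1%:R by apply: truncnS_gt.
have k0 : 0 < k.+1%:R :> R by [].
exists [tuple Num.floor (c i * k.+1%:R) | i < d], k => y yp j jd.
have := yp j jd; rewrite (nth_mktuple _ _ (Ordinal jd)) /=.
have /andP[fl flS] := floor_itv (c j * k.+1%:R); rewrite intrD in flS.
move=> /andP[]; rewrite ler_pdivrMr // ltr_pdivlMr // => lo hi.
have ek : 1 <= eps * k.+1%:R by rewrite -ler_pdivrMl // mulr1 (ltW k1).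
by rewrite ler_norml; apply/andP; split; nra.
Qed.

Lemma ray_cell_volume (nu : {measure set tup -> \bar R}) p q k n :
  is_lebesgue_volume nu -> nu (ray_cell p q k n) = ((k.+1%:R^-1) ^+ d)%:E.
Proof.
have side i : tnth (ray_corner p q k n 1) i - tnth (ray_corner p q k n 0) i = k.+1%:R^-1.
  by rewrite !tnth_mktuple addr0; ring.
move=> leb; rewrite /ray_cell leb => [|i]; last by rewrite -subr_ge0 side invr_ge0.
by rewrite (eq_bigr (fun=> k.+1%:R^-1)) ?prodr_const ?card_ord // => i _; apply: side.
Qed.

Lemma ray_cells_disjoint p q k n n' : (0 < d)%N -> 0 < qnorm q -> n != n' ->
  ray_cell p q k n `&` ray_cell p q k n' = set0.
Proof.
move=> d0 Q0 nn'; have Q1 := qnorm_ge1 Q0.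
have r1 : k.+1%:R^-1 <= 1 :> R by rewrite invf_le1 // ler1n.
suff apart m m' (z : tup) : (m < m')%N -> ray_cell p q k m z -> ~ ray_cell p q k m' z.
  apply/seteqP; split=> // z [zn zn'].
  by case: (ltngtP n n') nn' => // mn _; [apply: (apart n n') | apply: (apart n' n)].
move=> mm' /ray_cellP/(_ d0) + /ray_cellP/(_ d0).
rewrite /null_dir /= (mulrDl _ 1) mul1r => /andP[lo hi] /andP[lo' hi'].
have : m.+1%:R * qnorm q + qnorm q <= m'.+1%:R * qnorm q.
  by rewrite -[X in _ + X]mul1r -mulrDl ler_wpM2r ?(ltW Q0) // natr1 ler_nat.
move: lo hi lo' hi' r1 Q1; set u := m.+1%:R * _; set u' := m'.+1%:R * _.
set r := k.+1%:R^-1; set A := (nth 0 p 0)%:~R / _; lra.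
Qed.

(* With [m] the margin from [exists_int_direction], every [y] within [eps] of
   [a - (m/2) e_0] has [a - y] future timelike and [<b - y, u> < 0] for the
   Minkowski product with the null vector [u]; moving [y] into the past along
   [u] preserves both, while the causal future lies in [<., u> >= 0]. *)
Lemma incomparable_null_ray (a b : tup) : a <> b -> ~ causal_lt a b -> ~ causal_lt b a ->
  exists p q k, 0 < qnorm q /\
    null_ray p q k `<=` [set x | causal_lt x a /\ ~ causal_lt x b].
Proof.
move=> ab nab nba.
have [q [Q0 sq]] := exists_int_direction (incomparable_spacelike ab nab nba).
set D := \sum_(1 <= j < d) _ in sq.
pose m := D / qnorm q - (nth 0 b 0 - nth 0 a 0).
have m0 : 0 < m by rewrite subr_gt0 ltr_pdivlMr.
have mE : (nth 0 b 0 - nth 0 a 0 + m) * qnorm q <= D.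
  by rewrite /m addrC subrK divfK // gt_eqF.
have d0 : (0 < d)%N.
  by rewrite lt0n; apply: contraTneq Q0 => d0; rewrite /qnorm big_geq ?d0 // sqrtr0 ltxx.
pose eps := m / 2 / d.+2%:R.
have eps0 : 0 < eps by rewrite !divr_gt0.
have small : d.+1%:R * eps < m / 2.
  by rewrite /eps mulrCA gtr_pMr ?divr_gt0 // ltr_pdivrMr // mul1r ltr_nat.
pose c j := nth 0 a j - (if j == 0%N then m / 2 else 0).
have [p [k near]] := exists_grid_cell_near c eps0.
exists p, q, k; split=> // x [n _ xn].
pose y j := nth 0 x j + n.+1%:R * null_dir q j.
have yc j : (j < d)%N -> `|y j - c j| <= eps.
  by move=> jd; apply: near jd => i id; exact: ray_cellP xn id.
have aj j : (1 <= j < d)%N -> `|nth 0 a j - y j| <= eps.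
  by move=> /andP[j1 jd]; rewrite distrC; have := yc j jd; rewrite /c -[j]prednK //= subr0.
have a0 : `|nth 0 a 0 - y 0%N - m / 2| <= eps.
  by rewrite distrC; have := yc 0%N d0; rewrite /c /=; congr (`|_| <= _); ring.
have ya := future_cone_near_axis eps0 small a0 aj.
have yb : (nth 0 b 0 - y 0%N) * qnorm q <
    \sum_(1 <= j < d) (nth 0 b j - y j) * (nth 0 q j)%:~R.
  apply: dot_lt_of_near Q0 mE aj _; move: a0 small; rewrite ler_norml => /andP[_ a0].
  have : (d.-1%:R : R) * eps <= d%:R * eps.
    by rewrite ler_wpM2r ?(ltW eps0) // ler_nat leq_pred.
  by rewrite mulrSr; lra.
have [xa nxb] := null_shift_causal (t := n.+1%:R) Q0 (ltr0Sn _ _) (fun j => erefl) ya yb.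
by split; [apply/causal_ltP | move/causal_ltP].
Qed.

Lemma Lminus_neq_of_meets_null_rays (X : set tup) (a b : tup) :
  locally_finite X -> X a -> X b -> a <> b ->
  (forall p q k, 0 < qnorm q -> X `&` null_ray p q k !=set0) ->
  Lminus X a <> Lminus X b.
Proof.
move=> finX Xa Xb ab meets.
have irr (x : tup) : ~ causal_lt x x by case.
have [ba|nba] := pselect (causal_lt b a); first exact: Lminus_neq finX Xa Xb ba (irr b).
have [ab'|nab] := pselect (causal_lt a b).
  by move/esym; apply: Lminus_neq finX Xb Xa ab' (irr a).
have [p [q [k [Q0 ray_sub]]]] := incomparable_null_ray ab nab nba.
have [x [Xx /ray_sub[xa nxb]]] := meets p q k Q0.
exact: Lminus_neq finX Xa Xx xa nxb.
Qed.

End NullRays.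
Arguments qnorm {R d} q.

Lemma box_bounded_measurable (R : realType) (d : nat) (lo hi : d.-tuple R) :
  bounded_measurable (box lo hi).
Proof.
split; last by exists lo, hi.
have -> : box lo hi = \bigcap_(i in [set: 'I_d])
    ((fun x : d.-tuple R => tnth x i) @^-1` `[tnth lo i, tnth hi i[).
  apply/seteqP; split=> x /= xb i; last by have := xb i I; rewrite /= in_itv.
  by move=> _; rewrite /= in_itv; apply: xb.
apply: fin_bigcap_measurable => // i _.
by rewrite -[_ @^-1` _]setTI; apply: measurable_tnth.
Qed.

Section Poisson.
Variables (R : realType) (d : nat) (dT : measure_display) (T : measurableType dT).
Variables (P : probability T R) (nu : {measure set (d.-tuple R) -> \bar R}) (rho : R).
Variable S : T -> set (d.-tuple R).
Hypotheses (HS : poisson_point_process P nu rho S) (rho0 : 0 < rho).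
Local Notation tup := (d.-tuple R).

Lemma poisson_locally_finite w : locally_finite (S w).
Proof. by case: HS => finS _ _ _ lo hi; apply: finS; apply: box_bounded_measurable. Qed.

Lemma poisson_meets_disjoint (B : nat -> set tup) (v : R) : 0 < v ->
  (forall n, bounded_measurable (B n)) ->
  (forall n n', n != n' -> B n `&` B n' = set0) ->
  (forall n, nu (B n) = v%:E) ->
  P.-negligible [set w | forall n, S w `&` B n = set0].
Proof.
case: HS => _ measS lawS indepS v0 bB disjB nuB.
pose C m := \bigcap_(j in [set: 'I_m]) [set w | count_in (S w) (B j) = 0%N].
have mC m : measurable (C m) by apply: fin_bigcap_measurable => // j _; apply: measS.
have PC m : P (C m) = (expR (- (rho * v)) ^+ m)%:E.
  rewrite indepS //; last by move=> i j ij; apply: disjB.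
  under eq_bigr => j _ do rewrite lawS // nuB /poisson_mass expr0 invr1 !mul1r.
  by rewrite prodEFin prodr_const card_ord.
have mCinf : measurable (\bigcap_m C m) by apply: bigcapT_measurable.
exists (\bigcap_m C m); split=> //; last first.
  by move=> w /= miss m _ j _ /=; rewrite /count_in miss fset_set0 cardfs0.
have PCle m : (P (\bigcap_m C m) <= (expR (- (rho * v)) ^+ m)%:E)%E.
  by rewrite -PC; apply: le_measure; [exact/mem_set | exact/mem_set | move=> w /(_ m I)].
apply/eqP; rewrite eq_le measure_ge0 andbT; move: PCle.
case: (P _) => [z||] PCle //; last by have := PCle 0%N.
rewrite lee_fin; apply: (@le0_of_le_expr _ (expR (- (rho * v)))) => [|m].
  by rewrite ger0_norm ?expR_ge0 // expR_lt1 oppr_lt0 mulr_gt0.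
by have := PCle m; rewrite lee_fin.
Qed.

Lemma poisson_meets_null_ray p q k : (0 < d)%N -> is_lebesgue_volume nu ->
  0 < qnorm q :> R -> P.-negligible [set w | S w `&` null_ray p q k = set0].
Proof.
move=> d0 leb Q0.
have v0 : 0 < k.+1%:R^-1 ^+ d :> R by rewrite exprn_gt0 // invr_gt0.
have := poisson_meets_disjoint v0 (fun n => box_bounded_measurable _ _)
  (fun n n' => ray_cells_disjoint p k d0 Q0) (fun n => ray_cell_volume p q k n leb).
apply: negligibleS => w /= miss n.
by rewrite -subset0 -miss; apply: setIS => x xn; exists n.
Qed.

End Poisson.

Theorem mainTheorem16 (R : realType) (d : nat) (hd : (0 < d)%N)
    (dT : measure_display) (T : measurableType dT) (P : probability T R)
    (nu : {measure set (d.-tuple R) -> \bar R})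
    (Hnu : is_lebesgue_volume nu)
    (rho : R) (hrho : 0 < rho)
    (S : T -> set (d.-tuple R))
    (HS : poisson_point_process P nu rho S) :
  P.-negligible [set w | exists a b : d.-tuple R,
     S w a /\ S w b /\ a <> b /\ singleton_symmetric (S w) a b].
Proof.
pose misses (i : d.-tuple int * d.-tuple int * nat) :=
  [set w | 0 < qnorm i.1.2 :> R /\ S w `&` null_ray i.1.1 i.1.2 i.2 = set0].
apply: (@negligibleS _ _ _ _ (\bigcup_i misses i)); last first.
  apply: negligible_bigcup_countable => -[[p q] k].
  have [Q0|nQ0] := boolP (0 < qnorm q :> R).
    by apply: negligibleS (poisson_meets_null_ray HS hrho p k hd Hnu Q0) => w [].
  by apply: negligibleS (negligible_set0 _) => w [Q0]; move: nQ0; rewrite Q0.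
move=> w [a [b [Sa [Sb [ab [eqL _]]]]]]; apply: contrapT => hits.
apply: (Lminus_neq_of_meets_null_rays (poisson_locally_finite HS w) Sa Sb ab _ eqL).
by move=> p q k Q0; apply/set0P/eqP => miss; apply: hits; exists (p, q, k).
Qed.
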